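(* Let $G=(V,A)$ be a finite simple graph without loops and without isolated vertices and $\mathfrak n=\mathfrak n(G)$ its graph algebra, with center $\mathfrak z$. Then $(\Lambda^2\mathfrak n)^{\mathfrak n}=\Lambda^2\mathfrak z$ if and only if $|e|\ge 2$ for all $e\in V$.
   Context: Vertices $V=\{e_1,\dots,e_n\}$ are ordered; each edge joining $e_i,e_j$ ($i<j$) is oriented from $e_i$ to $e_j$. $\mathfrak n(G)$ (over a field of characteristic zero) has basis $V\cup A$, $[e_i,e_j]=\alpha$ if $\alpha$ goes from $e_i$ to $e_j$, $[e_i,e_j]=0$ if not adjacent, edges central; $\mathfrak z=\mathrm{span}(A)$. $|e|$ is the degree of $e$. $(\Lambda^2\mathfrak n)^{\mathfrak n}$ is the space of $\omega\in\Lambda^2\mathfrak n$ with $\mathrm{ad}_x\omega=0$ for all $x$, where $\mathrm{ad}_x(a\wedge b)=[x,a]\wedge b+a\wedge[x,b]$. *)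

From HB Require Import structures.
From mathcomp Require Import all_boot all_order all_algebra.
Set Implicit Arguments. Unset Strict Implicit. Unset Printing Implicit Defensive.
Import GRing.Theory.
Local Open Scope ring_scope.

(* Vertices are 'I_n (ordered by the natural order); the graph is given by a
   symmetric irreflexive relation adj.  An edge joining e_i, e_j with i < j
   is represented by the pair (i, j), oriented from e_i to e_j. *)
Definition edge_pred (n : nat) (adj : rel 'I_n) (p : 'I_n * 'I_n) : bool :=
  ((p.1 < p.2)%N && adj p.1 p.2).

Definition edgeT (n : nat) (adj : rel 'I_n) := {p : 'I_n * 'I_n | edge_pred adj p}.

(* Index type of the basis V ∪ A of n(G). *)
Definition Bas (n : nat) (adj : rel 'I_n) := ('I_n + edgeT adj)%type.

Section GraphAlgebra.
Variables (K : fieldType) (n : nat) (adj : rel 'I_n).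
Local Notation B := (Bas adj).

(* Elements of n(G) are coordinate vectors B -> K. *)
Definition delta (b : B) : B -> K := fun s => if s == b then 1 else 0.

(* Coordinates of the bracket of two basis elements:
   [e_i, e_j] = alpha if alpha goes from e_i to e_j, = -alpha if alpha goes
   from e_j to e_i, 0 otherwise; edges are central. *)
Definition brb (b c : B) : B -> K :=
  match b, c with
  | inl i, inl j => fun r =>
      match r with
      | inr a => if val a == (i, j) then 1 else if val a == (j, i) then -1 else 0
      | inl _ => 0
      end
  | _, _ => fun _ => 0
  end.

Definition bracket (x y : B -> K) : B -> K :=
  fun r => \sum_(b : B) \sum_(c : B) x b * y c * brb b c r.

(* Lambda^2 n(G) is identified with skew-symmetric coefficient arrays
   W : B -> B -> K, a /\ b corresponding to (p,q) |-> a_p b_q - b_p a_q. *)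
Definition skew_arr (W : B -> B -> K) : Prop := forall p q, W p q = - W q p.

(* ad_x (a /\ b) = [x,a] /\ b + a /\ [x,b], in coordinates. *)
Definition adW (x : B -> K) (W : B -> B -> K) : B -> B -> K :=
  fun p q => \sum_(r : B) bracket x (delta r) p * W r q
           + \sum_(r : B) bracket x (delta r) q * W p r.

Definition n_invariant (W : B -> B -> K) : Prop :=
  forall (x : B -> K) (p q : B), adW x W p q = 0.

Definition is_edge (b : B) : bool := if b is inr _ then true else false.

(* omega is in Lambda^2 z, z = span A *)
Definition in_wedge2_center (W : B -> B -> K) : Prop :=
  forall p q : B, ~~ (is_edge p && is_edge q) -> W p q = 0.

End GraphAlgebra.

From HB Require Import structures.
From mathcomp Require Import all_boot all_order all_algebra.
From mathcomp Require Import ring.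
Import GRing.Theory.
Local Open Scope ring_scope.
Set Implicit Arguments. Unset Strict Implicit. Unset Printing Implicit Defensive.

(* Since [e_k, e_i] = +-alpha_ki and edges are central, every bracket lands in
   z, so Lambda^2 z is always invariant; and ad_x acts on Lambda^2 n as a
   derivation.  If e_i has a single neighbour, its only edge alpha spans
   [n, e_i], hence e_i /\ alpha is invariant without lying in Lambda^2 z.
   If every vertex has degree >= 2, let omega be invariant.  Applying ad_{e_k}
   for a neighbour k of i at (alpha_ki, q) isolates +-omega(e_i, q); for q a
   vertex, or an edge beta not incident to k, the other term vanishes.  When
   no neighbour of i avoids beta = uv, then i, u, v form a triangle, and the
   invariance equations at its three vertices give 2 omega(e_i, beta) = 0. *)

Lemma cycle3_eq0 (R : idomainType) (a b c t x y : R) :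
  2%:R != 0 :> R -> a != 0 -> c != 0 ->
  a * t + b * x = 0 -> c * t - b * y = 0 -> c * x - a * y = 0 -> t = 0.
Proof.
move=> two a0 c0 e1 e2 e3.
have : 2%:R * a * c * t = c * (a * t + b * x) + a * (c * t - b * y) - b * (c * x - a * y).
  by ring.
rewrite e1 e2 e3 !mulr0 !subr0 addr0 => /eqP.
by rewrite !mulf_eq0 (negbTE two) (negbTE a0) (negbTE c0) => /eqP.
Qed.

Section Orientation.
Variables (K : fieldType) (n : nat) (adj : rel 'I_n).

Definition sorted_pair (x y : 'I_n) := if (x < y)%N then (x, y) else (y, x).

(* The coefficient of the edge joining x and y in [e_x, e_y]. *)
Definition sign_lt (x y : 'I_n) : K := if (x < y)%N then 1 else -1.

Lemma sorted_pairC (x y : 'I_n) : sorted_pair x y = sorted_pair y x.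
Proof. by rewrite /sorted_pair; case: ltngtP => // /val_inj ->. Qed.

Lemma sign_ltC (x y : 'I_n) : x != y -> sign_lt y x = - sign_lt x y.
Proof.
rewrite /sign_lt; case: ltngtP => [| |/val_inj ->]; rewrite ?opprK ?eqxx //.
Qed.

Lemma sign_lt_neq0 (x y : 'I_n) : sign_lt x y != 0.
Proof. by rewrite /sign_lt; case: ifP; rewrite ?oppr_eq0 oner_eq0. Qed.

Lemma edge_sorted (b : edgeT adj) :
  [/\ val b = sorted_pair (val b).1 (val b).2, (val b).1 != (val b).2
    & adj (val b).1 (val b).2].
Proof. by case: b => [[u v]] /= /andP [uv huv]; rewrite /sorted_pair uv neq_ltn uv. Qed.

Hypotheses (hsym : symmetric adj) (hirr : irreflexive adj).

Lemma adj_neq (x y : 'I_n) : adj x y -> x != y.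
Proof. by apply: contraTneq => ->; rewrite hirr. Qed.

Lemma exists_edge (x y : 'I_n) : adj x y -> exists a : edgeT adj, val a = sorted_pair x y.
Proof.
move=> xy; rewrite /sorted_pair; case: ltngtP => [lt|lt|/val_inj eq].
- by exists (exist _ (x, y) (introT andP (conj lt xy))).
- by exists (exist _ (y, x) (introT andP (conj lt (etrans (hsym y x) xy)))).
- by move: (adj_neq xy); rewrite eq eqxx.
Qed.

End Orientation.

Section GraphAlgebraBracket.
Variables (K : fieldType) (n : nat) (adj : rel 'I_n).
Local Notation B := (Bas adj).
Local Notation delta := (delta K).
Local Notation bracket := (@bracket K n adj).
Local Notation sign_lt := (sign_lt K).

Lemma brbN (b c r : B) : brb K b c r = - brb K c b r.
Proof.
case: b c r => [i|a] [j|c] [k|e] /=; rewrite ?oppr0 //.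
case: e => [[u v] /= /andP [uv _]].
rewrite !xpair_eqE; do ![case: eqP => ? /=]; subst; rewrite ?opprK ?oppr0 //.
by rewrite ltnn in uv.
Qed.

Lemma bracketN (x y : B -> K) r : bracket x y r = - bracket y x r.
Proof.
rewrite /bracket exchange_big -sumrN; apply: eq_bigr => c _.
rewrite -sumrN; apply: eq_bigr => b _.
by rewrite brbN mulrN [y c * _]mulrC.
Qed.

Lemma bracket_deltal (b : B) (y : B -> K) r :
  bracket (delta b) y r = \sum_(c : B) y c * brb K b c r.
Proof.
rewrite /bracket (bigD1 b) //= [X in _ + X]big1 => [|b' nb]; last first.
  by rewrite big1 // => c _; rewrite /delta (negbTE nb) !mul0r.
by rewrite addr0; apply: eq_bigr => c _; rewrite /delta eqxx mul1r.
Qed.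

Lemma bracket_deltar (x : B -> K) (c : B) r :
  bracket x (delta c) r = \sum_(b : B) x b * brb K b c r.
Proof.
rewrite bracketN bracket_deltal -sumrN.
by apply: eq_bigr => b _; rewrite brbN mulrN opprK.
Qed.

Lemma bracket_expandr (x y : B -> K) r :
  bracket x y r = \sum_(c : B) bracket x (delta c) r * y c.
Proof.
under [RHS]eq_bigr do rewrite bracket_deltar mulr_suml.
rewrite /bracket exchange_big; apply: eq_bigr => c _.
by apply: eq_bigr => b _; ring.
Qed.

Lemma adW_bracket (x : B -> K) (W : B -> B -> K) p q :
  adW x W p q = bracket x (W^~ q) p + bracket x (W p) q.
Proof. by rewrite /adW !bracket_expandr. Qed.

Lemma bracket_linear (z f g : B -> K) (s t : K) r :
  bracket z (fun c => f c * s - g c * t) r = bracket z f r * s - bracket z g r * t.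
Proof.
rewrite !(bracket_expandr z) !mulr_suml -sumrB; apply: eq_bigr => c _; ring.
Qed.

Definition wedge (x y : B -> K) : B -> B -> K := fun p q => x p * y q - y p * x q.

Lemma wedge_skew x y : skew_arr (wedge x y).
Proof. by move=> p q; rewrite /wedge; ring. Qed.

Lemma adW_wedge (z x y : B -> K) p q :
  adW z (wedge x y) p q
  = wedge (bracket z x) y p q + wedge x (bracket z y) p q.
Proof.
rewrite adW_bracket /wedge bracket_linear.
have -> : bracket z (fun r => x p * y r - y p * x r) q
          = bracket z (fun r => y r * x p - x r * y p) q.
  by apply: eq_bigr => b _; apply: eq_bigr => c _; ring.
by rewrite bracket_linear; ring.
Qed.

Lemma bracket_vertex_coord (x y : B -> K) j : bracket x y (inl j) = 0.
Proof.
rewrite /bracket big1 // => b _; rewrite big1 // => c _.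
by case: b c => [?|?] [?|?]; rewrite mulr0.
Qed.

Lemma bracket_center (x y : B -> K) r :
  (forall j, y (inl j) = 0) -> bracket x y r = 0.
Proof.
move=> y0; rewrite /bracket big1 // => b _; rewrite big1 // => [[j|e]] _.
  by rewrite y0 mulr0 mul0r.
by case: b => [?|?]; rewrite mulr0.
Qed.

Lemma bracket_vertex_edgeE k (a : edgeT adj) y :
  bracket (delta (inl k)) y (inr a) = \sum_(j : 'I_n)
     y (inl j) * (if val a == (k, j) then 1 else if val a == (j, k) then -1 else 0).
Proof.
by rewrite bracket_deltal big_sumType /= [X in _ + X]big1 ?addr0 // => e _; rewrite mulr0.
Qed.

Lemma bracket_vertex_edge k i (a : edgeT adj) y : k != i -> val a = sorted_pair k i ->
  bracket (delta (inl k)) y (inr a) = sign_lt k i * y (inl i).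
Proof.
move=> ki ha; rewrite bracket_vertex_edgeE (bigD1 i) //= big1 ?addr0 => [|j ji].
  rewrite ha /sorted_pair /sign_lt mulrC; case: ltnP => _; first by rewrite eqxx.
  by rewrite xpair_eqE [i == k]eq_sym (negbTE ki) eqxx.
rewrite ha /sorted_pair; case: ltnP => _; rewrite !xpair_eqE;
  do ![case: eqP => //= ?]; subst; rewrite ?mulr0 //; by rewrite eqxx in ki ji.
Qed.

Lemma bracket_vertex_edge_out k (a : edgeT adj) y :
  k \notin [:: (val a).1; (val a).2] -> bracket (delta (inl k)) y (inr a) = 0.
Proof.
rewrite !inE negb_or => /andP [k1 k2]; rewrite bracket_vertex_edgeE big1 // => j _.
move: k1 k2; case: (val a) => u v /= k1 k2; rewrite !xpair_eqE.
by do ![case: eqP => //= ?]; subst; rewrite ?mulr0 //; rewrite ?eqxx in k1 k2.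
Qed.

Lemma wedge2_center_invariant (W : B -> B -> K) :
  in_wedge2_center W -> n_invariant W.
Proof.
by move=> hW x p q; rewrite adW_bracket !bracket_center ?addr0 // => j; rewrite hW ?andbF.
Qed.

Lemma bracket_leaf (i : 'I_n) (al : edgeT adj) (x : B -> K) r :
  (forall e : edgeT adj, i \in [:: (val e).1; (val e).2] -> e = al) ->
  bracket x (delta (inl i)) r = bracket x (delta (inl i)) (inr al) * delta (inr al) r.
Proof.
move=> al_only; case: r => [j|e]; first by rewrite bracket_vertex_coord /delta mulr0.
rewrite /delta; case: eqP => [->|ne]; first by rewrite mulr1.
rewrite mulr0 bracketN bracket_vertex_edge_out ?oppr0 //.
by apply: contra_notN ne => /al_only ->.
Qed.

Lemma wedge_leaf_invariant (i : 'I_n) (al : edgeT adj) :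
  (forall e : edgeT adj, i \in [:: (val e).1; (val e).2] -> e = al) ->
  n_invariant (wedge (delta (inl i)) (delta (inr al))).
Proof.
move=> al_only x p q; rewrite adW_wedge /wedge.
rewrite (bracket_leaf x p al_only) (bracket_leaf x q al_only).
by rewrite ![bracket x (delta (inr al)) _]bracket_center //; ring.
Qed.

End GraphAlgebraBracket.

Section Neighbours.
Variables (n : nat) (adj : rel 'I_n) (i : 'I_n).

Lemma two_neighbours_cases (u v : 'I_n) : (2 <= #|[set j | adj i j]|)%N ->
  (exists2 k, adj i k & k \notin [:: u; v]) \/ (adj i u /\ adj i v).
Proof.
move=> /card_gt1P [k1 [k2 []]]; rewrite !inE => ik1 ik2 k12.
case: (boolP (k1 \in [:: u; v])) => [k1uv|]; last by left; exists k1.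
case: (boolP (k2 \in [:: u; v])) => [k2uv|]; last by left; exists k2.
right; move: k1uv k2uv k12 ik1 ik2; rewrite !inE.
by do 2![case/orP => /eqP ->]; rewrite ?eqxx // => _ -> ->.
Qed.

Hypothesis hsym : symmetric adj.
Variable j0 : 'I_n.
Hypotheses (ij0 : adj i j0) (leaf : ~~ (2 <= #|[set j | adj i j]|)%N).

Lemma leaf_neighbour j : adj i j -> j = j0.
Proof.
move=> ij; apply/eqP; apply: contraNT leaf => jj0; apply/card_gt1P.
by exists j, j0; rewrite !inE ij ij0 jj0.
Qed.

Lemma leaf_edge_unique (al : edgeT adj) : val al = sorted_pair i j0 ->
  forall e : edgeT adj, i \in [:: (val e).1; (val e).2] -> e = al.
Proof.
move=> hal e; rewrite !inE; case: (edge_sorted e) => he _.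
move: (val e).1 (val e).2 he => u v he uv /orP [/eqP ei | /eqP ei]; apply: val_inj.
- by subst u; rewrite hal he (leaf_neighbour uv).
- by subst v; rewrite hal he sorted_pairC (leaf_neighbour (etrans (hsym i u) uv)).
Qed.

End Neighbours.

Section InvariantsInCenter.
Variables (K : fieldType) (n : nat) (adj : rel 'I_n).
Local Notation B := (Bas adj).
Local Notation delta := (delta K).
Local Notation bracket := (@bracket K n adj).
Local Notation sign_lt := (sign_lt K).
Hypotheses (hsym : symmetric adj) (hirr : irreflexive adj).
Variable W : B -> B -> K.
Hypotheses (hskew : skew_arr W) (hinv : n_invariant W).

Lemma invariant_vertex k p q :
  bracket (delta (inl k)) (W^~ q) p + bracket (delta (inl k)) (W p) q = 0.
Proof. by rewrite -adW_bracket hinv. Qed.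

Lemma invariant_at_edge k i (a : edgeT adj) q :
  adj k i -> val a = sorted_pair k i ->
  sign_lt k i * W (inl i) q + bracket (delta (inl k)) (W (inr a)) q = 0.
Proof.
move=> ki ha.
by rewrite -(bracket_vertex_edge (W^~ q) (adj_neq hirr ki) ha) invariant_vertex.
Qed.

Lemma invariant_vertex_vertex i j k : adj k i -> W (inl i) (inl j) = 0.
Proof.
move=> ki; have [a ha] := exists_edge hsym hirr ki.
have /eqP := invariant_at_edge (inl j) ki ha.
rewrite bracket_vertex_coord addr0 mulf_eq0.
by rewrite (negbTE (sign_lt_neq0 _ _ _)) => /eqP.
Qed.

Lemma invariant_vertex_edge_far i k (b : edgeT adj) :
  adj k i -> k \notin [:: (val b).1; (val b).2] -> W (inl i) (inr b) = 0.
Proof.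
move=> ki kb; have [a ha] := exists_edge hsym hirr ki.
have /eqP := invariant_at_edge (inr b) ki ha.
rewrite bracket_vertex_edge_out // addr0 mulf_eq0.
by rewrite (negbTE (sign_lt_neq0 _ _ _)) => /eqP.
Qed.

Lemma invariant_vertex_edge_triangle i (b : edgeT adj) : 2%:R != 0 :> K ->
  adj i (val b).1 -> adj i (val b).2 -> W (inl i) (inr b) = 0.
Proof.
move=> two; case: (edge_sorted b); move: (val b).1 (val b).2 => u v hb uv _ iu iv.
have [ui vi] : adj u i /\ adj v i by rewrite !(hsym _ i).
have [a1 ha1] := exists_edge hsym hirr ui.
have [a2 ha2] := exists_edge hsym hirr vi.
have Eu := invariant_at_edge (inr b) ui ha1.
rewrite (bracket_vertex_edge _ uv hb) in Eu.
have Ev := invariant_at_edge (inr b) vi ha2.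
rewrite (bracket_vertex_edge _ _ (etrans hb (sorted_pairC u v))) 1?eq_sym // in Ev.
rewrite [sign_lt v u]sign_ltC // mulNr in Ev.
rewrite sorted_pairC in ha2; have Ei := invariant_at_edge (inr a1) iv ha2.
rewrite sorted_pairC in ha1; rewrite (bracket_vertex_edge _ (adj_neq hirr iu) ha1) in Ei.
rewrite [W (inl v) _]hskew [sign_lt i v]sign_ltC ?[sign_lt i u]sign_ltC
  ?(adj_neq hirr) // in Ei.
rewrite mulrNN mulNr in Ei.
exact: cycle3_eq0 two (sign_lt_neq0 _ u i) (sign_lt_neq0 _ v i) Eu Ev Ei.
Qed.

Hypothesis two : 2%:R != 0 :> K.
Hypothesis hnoiso : forall i : 'I_n, exists j : 'I_n, adj i j.
Hypothesis hdeg : forall i : 'I_n, (2 <= #|[set j | adj i j]|)%N.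

Lemma invariant_vertex_edge i (b : edgeT adj) : W (inl i) (inr b) = 0.
Proof.
case: (two_neighbours_cases (val b).1 (val b).2 (hdeg i)) => [[k ik kb]|[iu iv]].
- by apply: (invariant_vertex_edge_far _ kb); rewrite hsym.
- exact: invariant_vertex_edge_triangle.
Qed.

Lemma invariant_in_wedge2_center : in_wedge2_center W.
Proof.
move=> [i|a] [j|b] //= _; last by rewrite hskew invariant_vertex_edge oppr0.
- have [k ik] := hnoiso i.
  by apply: (@invariant_vertex_vertex _ _ k); rewrite hsym.
- exact: invariant_vertex_edge.
Qed.

End InvariantsInCenter.

Theorem mainTheorem10 (K : fieldType) (hK : [pchar K] =i pred0)
  (n : nat) (adj : rel 'I_n)
  (hsym : symmetric adj) (hirr : irreflexive adj)
  (hnoiso : forall i : 'I_n, exists j : 'I_n, adj i j) :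
  (forall W : Bas adj -> Bas adj -> K,
      skew_arr W -> (n_invariant W <-> in_wedge2_center W))
  <-> (forall i : 'I_n, (2 <= #|[set j | adj i j]|)%N).
Proof.
split=> [invariants_central i | hdeg W hskew].
- apply/negPn/negP => leaf.
  have [j0 ij0] := hnoiso i.
  have [al hal] := exists_edge hsym hirr ij0.
  pose W := wedge (delta K (inl i)) (delta K (inr al)).
  have hW : n_invariant W := wedge_leaf_invariant (leaf_edge_unique hsym ij0 leaf hal).
  have /eqP := (invariants_central W (wedge_skew _ _)).1 hW (inl i) (inr al) isT.
  by rewrite /W /wedge /delta !eqxx /= mulr0 subr0 mulr1 oner_eq0.
- have two : 2%:R != 0 :> K by rewrite (pcharf0P K).1.
  split=> [hinv|]; [exact: invariant_in_wedge2_center | exact: wedge2_center_invariant].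
Qed.
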